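(* Let $\eta$ be a loop in parameter space along which the local gap condition holds, and let $\mathcal{E}_{\mathrm{B}}(\eta)\to\mathbb{T}^{d+1}$ be the associated Bloch line bundle. If the north pole variety $\mathcal{N}_\eta$ is empty or the south pole variety $\mathcal{S}_\eta$ is empty, then $\mathcal{E}_{\mathrm{B}}(\eta)$ is trivial.
   Context: Consider a periodic two-band system with two internal degrees of freedom: a continuous map $Q\ni q\mapsto H(\cdot;q)$ with $H(k;q)=h_0(k;q)\mathrm{id}_2+\sum_{j=1}^3h_j(k;q)\sigma_j$, $k\in\mathbb{T}^d$, where the $h_j(\cdot;q)\in C(\mathbb{T}^d)$ are real-valued and $\sigma_1,\sigma_2,\sigma_3$ are the Pauli matrices. Let $|h|(k;q)=(\sum_{j=1}^3h_j(k;q)^2)^{1/2}$. Let $\eta:\mathbb{S}^1\to Q$ be continuous with $|h|(k;\eta(s))>0$ for all $k,s$ (local gap condition), fix $T>0$, and set $h_{\eta,j}(k,t)=h_j(k;\eta(2\pi t/T))$, $|h_\eta|(k,t)=|h|(k;\eta(2\pi t/T))$. The Fermi projection is $P_\eta(k,t)=\frac12\big(\mathrm{id}_2-\sum_{j=1}^3\frac{h_{\eta,j}(k,t)}{|h_\eta|(k,t)}\sigma_j\big)$, and the Bloch line bundle is $\mathcal{E}_{\mathrm{B}}(\eta)=\bigsqcup_{(k,t)\in\mathbb{T}^{d+1}}\mathrm{ran}\,P_\eta(k,t)$. With $\theta_\eta(k,t)=\arccos(h_{\eta,3}(k,t)/|h_\eta|(k,t))\in[0,\pi]$, the north and south pole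 varieties are $\mathcal{N}_\eta=\{(k,t)\in\mathbb{T}^{d+1}:\theta_\eta(k,t)=0\}$ and $\mathcal{S}_\eta=\{(k,t)\in\mathbb{T}^{d+1}:\theta_\eta(k,t)=\pi\}$. *)

From HB Require Import structures.
From mathcomp Require Import all_boot all_order all_algebra.
From mathcomp Require Import all_classical all_reals all_analysis.
From mathcomp Require Import complex.
Set Implicit Arguments. Unset Strict Implicit. Unset Printing Implicit Defensive.
Import Order.TTheory GRing.Theory Num.Theory.
Import numFieldNormedType.Exports.
Local Open Scope ring_scope.
Local Open Scope classical_set_scope.

(* The Brillouin torus T^d = R^d / (2 pi Z)^d is modelled by functions on
   'rV[R]_d that are invariant under the shifts k |-> k + 2 pi e_i.        *)
Definition kshift {R : realType} {d : nat} (k : 'rV[R]_d) (i : 'I_d) : 'rV[R]_d :=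
  k + (2 * pi) *: delta_mx 0 i.

Definition coeff_fun {R : realType} {d : nat} {Q : topologicalType}
    (h : 'rV[R]_d -> Q -> R) : Prop :=
  continuous (fun p : 'rV[R]_d * Q => h p.1 p.2) /\
  (forall k q i, h (kshift k i) q = h k q).

Definition loop {R : realType} {Q : topologicalType} (eta : R -> Q) : Prop :=
  continuous eta /\ (forall s, eta (s + 2 * pi) = eta s).

Definition hnorm {R : realType} {d : nat} {Q : Type}
    (h1 h2 h3 : 'rV[R]_d -> Q -> R) (k : 'rV[R]_d) (q : Q) : R :=
  Num.sqrt (h1 k q ^+ 2 + h2 k q ^+ 2 + h3 k q ^+ 2).

Definition heta {R : realType} {d : nat} {Q : Type}
    (h : 'rV[R]_d -> Q -> R) (eta : R -> Q) (T : R) (k : 'rV[R]_d) (t : R) : R :=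
  h k (eta (2 * pi * t / T)).

Definition sigma1 {R : realType} : 'M[R[i]]_2 :=
  \matrix_(a < 2, b < 2) (if a == b then 0 else 1).
Definition sigma2 {R : realType} : 'M[R[i]]_2 :=
  \matrix_(a < 2, b < 2)
    (if a == b then 0 else if a == ord0 then - (Complex 0 1) else Complex 0 1).
Definition sigma3 {R : realType} : 'M[R[i]]_2 :=
  \matrix_(a < 2, b < 2)
    (if a == b then (if a == ord0 then 1 else -1) else 0).

Definition toC {R : realType} (x : R) : R[i] := Complex x 0.

Definition fermi_proj {R : realType} {d : nat} {Q : Type}
    (h1 h2 h3 : 'rV[R]_d -> Q -> R) (eta : R -> Q) (T : R)
    (k : 'rV[R]_d) (t : R) : 'M[R[i]]_2 :=
  let n := hnorm h1 h2 h3 k (eta (2 * pi * t / T)) in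
  toC (2^-1) *: (1%:M
    - (toC (heta h1 eta T k t / n) *: sigma1
       + toC (heta h2 eta T k t / n) *: sigma2
       + toC (heta h3 eta T k t / n) *: sigma3)).

Definition in_ran {R : realType} (P : 'M[R[i]]_2) (v : 'cV[R[i]]_2) : Prop :=
  exists w : 'cV[R[i]]_2, v = P *m w.

Definition continuous_C2 {R : realType} {d : nat}
    (psi : 'rV[R]_d * R -> 'cV[R[i]]_2) : Prop :=
  forall a : 'I_2,
    continuous (fun x => Re (psi x a ord0)) /\
    continuous (fun x => Im (psi x a ord0)).

(* The Bloch line bundle E_B(eta) over T^{d+1} = T^d x (R / T Z) is trivial:
   it admits a global frame, i.e. a continuous, nowhere vanishing section
   (k,t) |-> psi(k,t) in ran P_eta(k,t), periodic in k and in t. *)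
Definition bloch_bundle_trivial {R : realType} {d : nat} {Q : Type}
    (h1 h2 h3 : 'rV[R]_d -> Q -> R) (eta : R -> Q) (T : R) : Prop :=
  exists psi : 'rV[R]_d * R -> 'cV[R[i]]_2,
    [/\ continuous_C2 psi,
        forall k t i, psi (kshift k i, t) = psi (k, t),
        forall k t, psi (k, t + T) = psi (k, t),
        forall k t, psi (k, t) != 0 &
        forall k t, in_ran (fermi_proj h1 h2 h3 eta T k t) (psi (k, t))].

Definition theta_eta {R : realType} {d : nat} {Q : Type}
    (h1 h2 h3 : 'rV[R]_d -> Q -> R) (eta : R -> Q) (T : R)
    (k : 'rV[R]_d) (t : R) : R :=
  acos (heta h3 eta T k t / hnorm h1 h2 h3 k (eta (2 * pi * t / T))).

(* North and south pole varieties (as sets of representatives (k,t)). *)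
Definition north_pole {R : realType} {d : nat} {Q : Type}
    (h1 h2 h3 : 'rV[R]_d -> Q -> R) (eta : R -> Q) (T : R) : set ('rV[R]_d * R) :=
  [set x | theta_eta h1 h2 h3 eta T x.1 x.2 = 0].
Definition south_pole {R : realType} {d : nat} {Q : Type}
    (h1 h2 h3 : 'rV[R]_d -> Q -> R) (eta : R -> Q) (T : R) : set ('rV[R]_d * R) :=
  [set x | theta_eta h1 h2 h3 eta T x.1 x.2 = pi].

(** The Fermi projection is P = (1 - n.sigma)/2 for the unit vector n = h/|h|.
    Its first column is ((1 - n_3)/2, -(n_1 + i n_2)/2), which vanishes exactly
    where n_3 = 1, i.e. on the north pole variety; its second column
    (-(n_1 - i n_2)/2, (1 + n_3)/2) vanishes exactly on the south pole variety.
    If one of the two varieties is empty, the corresponding column of P is a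
    continuous, periodic, nowhere vanishing section of the Bloch bundle. *)

From HB Require Import structures.
From mathcomp Require Import all_boot all_order all_algebra.
From mathcomp Require Import all_classical all_reals all_analysis.
From mathcomp Require Import complex ring.
Import Order.TTheory GRing.Theory Num.Theory.
Import numFieldNormedType.Exports.
Local Open Scope ring_scope.
Local Open Scope classical_set_scope.

Section PauliProjection.
Context {R : realType}.

Definition pauli_proj (a1 a2 a3 : R) : 'M[R[i]]_2 :=
  toC (2^-1) *: (1%:M - (toC a1 *: sigma1 + toC a2 *: sigma2 + toC a3 *: sigma3)).

Ltac pauli_entry := rewrite /pauli_proj /toC !mxE /=;
  apply/eqP; rewrite eq_complex /=; apply/andP; split; apply/eqP; by field.

Lemma pauli_proj00 (a1 a2 a3 : R) : pauli_proj a1 a2 a3 0 0 = Complex ((1 - a3) / 2) 0.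
Proof. pauli_entry. Qed.
Lemma pauli_proj10 (a1 a2 a3 : R) : pauli_proj a1 a2 a3 1 0 = Complex (- a1 / 2) (- a2 / 2).
Proof. pauli_entry. Qed.
Lemma pauli_proj01 (a1 a2 a3 : R) : pauli_proj a1 a2 a3 0 1 = Complex (- a1 / 2) (a2 / 2).
Proof. pauli_entry. Qed.
Lemma pauli_proj11 (a1 a2 a3 : R) : pauli_proj a1 a2 a3 1 1 = Complex ((1 + a3) / 2) 0.
Proof. pauli_entry. Qed.

Lemma pauli_proj_col0_neq0 (a1 a2 a3 : R) : a3 != 1 -> col 0 (pauli_proj a1 a2 a3) != 0.
Proof.
apply: contraNneq => /matrixP/(_ 0 0); rewrite mxE pauli_proj00 mxE.
by case=> /eqP; rewrite mulf_eq0 invr_eq0 pnatr_eq0 orbF subr_eq0 eq_sym.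
Qed.

Lemma pauli_proj_col1_neq0 (a1 a2 a3 : R) : a3 != -1 -> col 1 (pauli_proj a1 a2 a3) != 0.
Proof.
apply: contraNneq => /matrixP/(_ 1 0); rewrite mxE pauli_proj11 mxE.
by case=> /eqP; rewrite mulf_eq0 invr_eq0 pnatr_eq0 orbF addrC addr_eq0.
Qed.

End PauliProjection.

Lemma continuous_real_complex (R : realType) (X : topologicalType) (f : X -> R) :
  continuous f -> continuous (fun x => (f x)%:C%C : (R[i] : numClosedFieldType)).
Proof.
move=> cf x; apply/cvgrPdist_lt => e e_gt0.
move: (e_gt0); rewrite ltcE /= => /andP[/eqP Im_e Re_e_gt0].
have := cf x; move/cvgrPdist_lt/(_ _ Re_e_gt0); apply: filterS => y fxy.
by rewrite -rmorphB normc_def /= expr0n /= addr0 sqrtr_sqr ltcE /= -Im_e eqxx.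
Qed.

Lemma continuous_C2P (R : realType) (d : nat) (psi : 'rV[R]_d * R -> 'cV[R[i]]_2) :
  (forall a, continuous (fun x => complex.Re (psi x a ord0))) ->
  (forall a, continuous (fun x => complex.Im (psi x a ord0))) ->
  continuous_C2 psi.
Proof.
move=> cre cim a; split.
- under eq_fun do rewrite -complexRe.
  exact: continuous_real_complex.
- under eq_fun do rewrite -complexIm.
  exact: continuous_real_complex.
Qed.

Lemma ord2_ind {P : 'I_2 -> Prop} : P 0 -> P 1 -> forall i, P i.
Proof. by move=> P0 P1 [[|[|//]] i]; [move: P0 | move: P1]; congr P; apply: val_inj. Qed.

Lemma continuous_C2_pauli_proj_col {R : realType} {d : nat}
    {a1 a2 a3 : 'rV[R]_d * R -> R} (j : 'I_2) :
  continuous a1 -> continuous a2 -> continuous a3 ->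
  continuous_C2 (fun x => col j (pauli_proj (a1 x) (a2 x) (a3 x))).
Proof.
move=> c1 c2 c3; apply: continuous_C2P; move: j; do 2 apply: ord2_ind.
all: under eq_fun do rewrite mxE ?pauli_proj00 ?pauli_proj10 ?pauli_proj01 ?pauli_proj11 /=.
all: move=> x; first [ exact: cvg_cst
  | exact: continuousM (c2 x) (cvg_cst _)
  | exact: continuousM (continuousN (c1 x)) (cvg_cst _)
  | exact: continuousM (continuousN (c2 x)) (cvg_cst _)
  | exact: continuousM (continuousB (cvg_cst _) (c3 x)) (cvg_cst _)
  | exact: continuousM (continuousD (cvg_cst _) (c3 x)) (cvg_cst _) ].
Qed.

Lemma continuous_heta {R : realType} {d : nat} {Q : topologicalType}
    {h : 'rV[R]_d -> Q -> R} {eta : R -> Q} (T : R) :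
  coeff_fun h -> loop eta -> continuous (fun x : 'rV[R]_d * R => heta h eta T x.1 x.2).
Proof.
move=> [ch _] [ceta _] x.
apply: (@continuous2_cvg _ _ _ _ _ _ fst (fun x => eta (2 * pi * x.2 / T)) h).
- exact: ch (x.1, eta (2 * pi * x.2 / T)).
- exact: cvg_fst.
apply: (continuous_comp (f := fun x : 'rV[R]_d * R => 2 * pi * x.2 / T)); last exact: ceta.
apply: continuousM; last exact: cvg_cst.
by apply: continuousM; [exact: cvg_cst | exact: cvg_snd].
Qed.

Section BlochBundle.
Context {R : realType} {d : nat} {Q : topologicalType}.
Context {h1 h2 h3 : 'rV[R]_d -> Q -> R} {eta : R -> Q} {T : R}.
Hypotheses (ch1 : coeff_fun h1) (ch2 : coeff_fun h2) (ch3 : coeff_fun h3).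
Hypotheses (eta_loop : loop eta) (gap : forall k s, 0 < hnorm h1 h2 h3 k (eta s)).

Definition hnorm_eta (x : 'rV[R]_d * R) : R := hnorm h1 h2 h3 x.1 (eta (2 * pi * x.2 / T)).

Definition unit_coeff (h : 'rV[R]_d -> Q -> R) (x : 'rV[R]_d * R) : R :=
  heta h eta T x.1 x.2 / hnorm_eta x.

Lemma fermi_projE k t : fermi_proj h1 h2 h3 eta T k t =
  pauli_proj (unit_coeff h1 (k, t)) (unit_coeff h2 (k, t)) (unit_coeff h3 (k, t)).
Proof. by []. Qed.

Lemma hnorm_eta_neq0 x : hnorm_eta x != 0.
Proof. exact: lt0r_neq0 (gap _ _). Qed.

Lemma continuous_hnorm_eta : continuous hnorm_eta.
Proof.
have c1 := continuous_heta T ch1 eta_loop.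
have c2 := continuous_heta T ch2 eta_loop.
have c3 := continuous_heta T ch3 eta_loop.
move=> x; exact: continuous_comp (continuousD (continuousD (continuousM (c1 x) (c1 x))
  (continuousM (c2 x) (c2 x))) (continuousM (c3 x) (c3 x))) (@sqrt_continuous R _).
Qed.

Lemma continuous_unit_coeff {h} : coeff_fun h -> continuous (unit_coeff h).
Proof.
move=> ch x; exact: continuousM (continuous_heta T ch eta_loop x)
  (continuousV (hnorm_eta_neq0 x) (continuous_hnorm_eta x)).
Qed.

Lemma unit_coeff_kshift h k t i :
  coeff_fun h -> unit_coeff h (kshift k i, t) = unit_coeff h (k, t).
Proof.
case=> _ hk; rewrite /unit_coeff /hnorm_eta /heta /hnorm /= hk.
by case: ch1 => _ ->; case: ch2 => _ ->; case: ch3 => _ ->.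
Qed.

Lemma unit_coeff_periodic h k t : T != 0 -> unit_coeff h (k, t + T) = unit_coeff h (k, t).
Proof.
move=> T_neq0; rewrite /unit_coeff /hnorm_eta /heta /=.
have -> : 2 * pi * (t + T) / T = 2 * pi * t / T + 2 * pi by field.
by case: eta_loop => _ ->.
Qed.

Lemma north_pole_unit_coeff k t :
  unit_coeff h3 (k, t) = 1 -> north_pole h1 h2 h3 eta T (k, t).
Proof. by rewrite /unit_coeff /hnorm_eta /north_pole /theta_eta /= => ->; exact: acos1. Qed.

Lemma south_pole_unit_coeff k t :
  unit_coeff h3 (k, t) = -1 -> south_pole h1 h2 h3 eta T (k, t).
Proof. by rewrite /unit_coeff /hnorm_eta /south_pole /theta_eta /= => ->; exact: acosN1. Qed.

Lemma bloch_bundle_trivial_col (j : 'I_2) : T != 0 ->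
  (forall k t, col j (fermi_proj h1 h2 h3 eta T k t) != 0) ->
  bloch_bundle_trivial h1 h2 h3 eta T.
Proof.
move=> T_neq0 col_neq0; exists (fun x => col j (fermi_proj h1 h2 h3 eta T x.1 x.2)); split.
- exact: continuous_C2_pauli_proj_col j (continuous_unit_coeff ch1)
    (continuous_unit_coeff ch2) (continuous_unit_coeff ch3).
- by move=> k t i; rewrite /= !fermi_projE !unit_coeff_kshift.
- by move=> k t; rewrite /= !fermi_projE !unit_coeff_periodic.
- exact: col_neq0.
- by move=> k t; exists (delta_mx j 0); rewrite colE.
Qed.

End BlochBundle.

Theorem theorem4p2 (R : realType) (d : nat) (Q : topologicalType)
    (h0 h1 h2 h3 : 'rV[R]_d -> Q -> R) (eta : R -> Q) (T : R) :
  coeff_fun h0 -> coeff_fun h1 -> coeff_fun h2 -> coeff_fun h3 ->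
  loop eta ->
  (forall k s, 0 < hnorm h1 h2 h3 k (eta s)) ->
  0 < T ->
  north_pole h1 h2 h3 eta T = set0 \/ south_pole h1 h2 h3 eta T = set0 ->
  bloch_bundle_trivial h1 h2 h3 eta T.
Proof.
move=> _ ch1 ch2 ch3 eta_loop gap T_gt0 [north0 | south0].
- apply: (bloch_bundle_trivial_col ch1 ch2 ch3 eta_loop gap 0 (lt0r_neq0 T_gt0)) => k t.
  rewrite fermi_projE; apply/pauli_proj_col0_neq0/eqP.
  by move/north_pole_unit_coeff; rewrite north0.
- apply: (bloch_bundle_trivial_col ch1 ch2 ch3 eta_loop gap 1 (lt0r_neq0 T_gt0)) => k t.
  rewrite fermi_projE; apply/pauli_proj_col1_neq0/eqP.
  by move/south_pole_unit_coeff; rewrite south0.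
Qed.
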